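(* Let $\mathcal{S}\subset\mathbb{R}^d$ be a smooth, closed one-dimensional manifold of arclength $L>0$, parameterized by arclength $s$, so that functions on $\mathcal{S}$ are identified with $L$-periodic functions on $\mathbb{R}$. Let $c>0$ and let $f$ be a continuous $L$-periodic function, and let $u$ be the unique $L$-periodic solution of $(c-\frac{\mathrm{d}^2}{\mathrm{d}s^2})u=f$ on $\mathbb{R}$. Let $\mathcal{S}_1=[a_1,b_1]$ and $\mathcal{S}_2=[a_2,b_2]$ be overlapping subdomains with $a_1<0$ and $b_2>L$. Set $\ell_1=b_1-a_1$, $\ell_2=b_2-a_2$, and define the overlaps $\delta_1=b_1-a_2>0$ and $\delta_2=b_2-(a_1+L)>0$. Assume $0<\delta_1+\delta_2<\min\{\ell_1,\ell_2\}$. Starting from arbitrary continuous initial functions $u_1^0$ on $\mathcal{S}_1$ and $u_2^0$ on $\mathcal{S}_2$, define for $n=0,1,2,\dots$ the parallel Schwarz iterates $u_1^{n+1}$ on $\mathcal{S}_1$ and $u_2^{n+1}$ on $\mathcal{S}_2$ as the solutions of $$\begin{cases}(c-\frac{\mathrm{d}^2}{\mathrm{d}s^2})u_1^{n+1}=f &\text{in } (a_1,b_1),\\ u_1^{n+1}(a_1)=u_2^n(a_1+L),\\ u_1^{n+1}(b_1)=u_2^n(b_1),\end{cases}\qquad \begin{cases}(c-\frac{\mathrm{d}^2}{\mathrm{d}s^2})u_2^{n+1}=f &\text{in } (a_2,b_2),\\ u_2^{n+1}(a_2)=u_1^n(a_2),\\ u_2^{n+1}(b_2)=u_1^n(b_2-L).\end{cases}$$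 Then the iteration converges globally: for every choice of initial functions, $\max_{s\in\mathcal{S}_j}|u_j^n(s)-u(s)|\to 0$ as $n\to\infty$ for $j=1,2$.
   Context: This iteration is the continuous (mesh size $h\to 0$) limit of the parallel Schwarz / restricted additive Schwarz solver applied to the closest point method discretization of the surface intrinsic positive Helmholtz equation $(c-\Delta_{\mathcal{S}})u=f$ on the curve $\mathcal{S}$; on a one-dimensional manifold parameterized by arclength, $\Delta_{\mathcal{S}}=\mathrm{d}^2/\mathrm{d}s^2$. Since $a_1<0$ and $b_2>L$, the subdomain intervals extend beyond $[0,L]$ and $f$ is evaluated through its $L$-periodic extension. The boundary points used in the transmission conditions satisfy $a_1+L,\,b_1\in\mathcal{S}_2$ and $a_2,\,b_2-L\in\mathcal{S}_1$ under the stated assumptions. *)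

From Stdlib Require Import Reals.
From Coquelicot Require Import Coquelicot.
Open Scope R_scope.

Definition periodic (L : R) (g : R -> R) : Prop :=
  forall x, g (x + L) = g x.

Definition continuous_on_closed (g : R -> R) (a b : R) : Prop :=
  forall x, a <= x <= b ->
    forall eps, 0 < eps -> exists delta, 0 < delta /\
      forall y, a <= y <= b -> Rabs (y - x) < delta -> Rabs (g y - g x) < eps.

Definition helmholtz_at (c : R) (f g : R -> R) (x : R) : Prop :=
  ex_derive g x /\ ex_derive (Derive g) x /\
  c * g x - Derive (Derive g) x = f x.

Definition helmholtz_on (c : R) (f g : R -> R) (a b : R) : Prop :=
  continuous_on_closed g a b /\
  (forall x, a < x < b -> helmholtz_at c f g x).

(* The errors [u_j^n - u] solve the homogeneous equation [(c - d^2/ds^2) e = 0] on each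
   subdomain, with boundary values equal to the previous errors of the other subdomain at
   the interface points [a1 + L, b1] and [a2, b2 - L].  The maximum principle, applied
   against the quadratic barrier [w = 1 + beta (x - a) (x - b)] (a supersolution equal to
   1 at the ends and smaller than 1 inside), bounds such an error by [M * w] when [M]
   bounds its boundary values.  So the largest interface error is multiplied at each step
   by at most [q < 1], the largest barrier value at the interface points, and the errors
   decay uniformly like [q ^ n]. *)

From Stdlib Require Import Reals Lra Lia.
From Coquelicot Require Import Coquelicot.
Open Scope R_scope.

Lemma continuous_on_closed_of_continuous (g : R -> R) a b :
  (forall x, continuous g x) -> continuous_on_closed g a b.
Proof.
  intros Hg x _ eps Heps.
  assert (Hx := proj2 (continuity_pt_filterlim g x) (Hg x)).
  destruct (proj1 (continuity_pt_locally g x) Hx (mkposreal eps Heps)) as [del Hdel].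
  exists del; split; [apply cond_pos|].
  intros y _ Hy; exact (Hdel y Hy).
Qed.

Lemma continuous_on_closed_minus (g k : R -> R) a b :
  continuous_on_closed g a b -> continuous_on_closed k a b ->
  continuous_on_closed (fun x => g x - k x) a b.
Proof.
  intros Hg Hk x Hx eps Heps.
  destruct (Hg x Hx (eps / 2)) as [d1 [Hd1 Hg']]; [lra|].
  destruct (Hk x Hx (eps / 2)) as [d2 [Hd2 Hk']]; [lra|].
  exists (Rmin d1 d2); split; [now apply Rmin_glb_lt|].
  intros y Hy Hyx.
  assert (G := Hg' y Hy (Rlt_le_trans _ _ _ Hyx (Rmin_l _ _))).
  assert (K := Hk' y Hy (Rlt_le_trans _ _ _ Hyx (Rmin_r _ _))).
  replace (g y - k y - (g x - k x)) with ((g y - g x) - (k y - k x)) by ring.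
  pose proof (Rabs_triang (g y - g x) (- (k y - k x))) as T.
  rewrite Rabs_Ropp in T. unfold Rminus at 1. lra.
Qed.

Lemma continuous_on_closed_scal (g : R -> R) s a b :
  continuous_on_closed g a b -> continuous_on_closed (fun x => s * g x) a b.
Proof.
  intros Hg x Hx eps Heps.
  assert (Hs : 0 < Rabs s + 1) by (pose proof (Rabs_pos s); lra).
  destruct (Hg x Hx (eps / (Rabs s + 1))) as [d [Hd Hg']].
  { now apply Rdiv_lt_0_compat. }
  exists d; split; [exact Hd|].
  intros y Hy Hyx; cbv beta.
  replace (s * g y - s * g x) with (s * (g y - g x)) by ring.
  rewrite Rabs_mult.
  assert (G := Hg' y Hy Hyx).
  apply (Rle_lt_trans _ ((Rabs s + 1) * Rabs (g y - g x))).
  - pose proof (Rabs_pos (g y - g x)); nra.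
  - apply (Rmult_lt_compat_l _ _ _ Hs) in G.
    now replace ((Rabs s + 1) * (eps / (Rabs s + 1))) with eps in G by (field; lra).
Qed.

Definition clamp (a b x : R) : R := Rmax a (Rmin b x).

Lemma clamp_id a b x : a <= x <= b -> clamp a b x = x.
Proof. intros. unfold clamp, Rmax, Rmin. repeat destruct Rle_dec; lra. Qed.

Lemma clamp_in a b x : a <= b -> a <= clamp a b x <= b.
Proof. intros. unfold clamp, Rmax, Rmin. repeat destruct Rle_dec; lra. Qed.

Lemma clamp_dist a b x z : a <= z <= b -> Rabs (clamp a b x - z) <= Rabs (x - z).
Proof.
  intros. unfold clamp, Rmax, Rmin, Rabs.
  repeat destruct Rle_dec; repeat destruct Rcase_abs; lra.
Qed.

Lemma continuous_on_closed_attains_max (g : R -> R) a b :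
  a <= b -> continuous_on_closed g a b ->
  exists x0, a <= x0 <= b /\ forall y, a <= y <= b -> g y <= g x0.
Proof.
  intros Hab Hg.
  (* unlike [g] itself, the clamped extension is continuous at [a] and [b] in the usual sense *)
  assert (Hcont : forall z, a <= z <= b -> continuity_pt (fun y => g (clamp a b y)) z).
  { intros z Hz. apply continuity_pt_locally. intros eps.
    destruct (Hg z Hz eps (cond_pos eps)) as [del [Hdel Hg']].
    exists (mkposreal del Hdel). intros y Hy. change (Rabs (y - z) < del) in Hy.
    rewrite (clamp_id a b z Hz).
    apply Hg'; [now apply clamp_in|].
    pose proof (clamp_dist a b y z Hz); lra. }
  destruct (continuity_ab_maj _ a b Hab Hcont) as [x0 [Hmax Hx0]].
  exists x0; split; [exact Hx0|].
  intros y Hy. specialize (Hmax y Hy).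
  now rewrite (clamp_id a b y Hy), (clamp_id a b x0 Hx0) in Hmax.
Qed.

Lemma second_derivative_nonpos_at_local_max (h h1 : R -> R) x0 r d2 :
  0 < r ->
  (forall t, Rabs (t - x0) < r -> is_derive h t (h1 t) /\ h t <= h x0) ->
  is_derive h1 x0 d2 -> d2 <= 0.
Proof.
  intros Hr Hloc Hd2.
  assert (Hder : forall t, Rabs (t - x0) < r -> derivable_pt_lim h t (h1 t)).
  { intros t Ht. now apply is_derive_Reals, Hloc. }
  assert (Hflat : h1 x0 = 0).
  { assert (H0 : Rabs (x0 - x0) < r) by (rewrite Rminus_diag, Rabs_R0; exact Hr).
    apply (deriv_maximum h (x0 - r) (x0 + r) x0 (exist _ _ (Hder x0 H0))); try lra.
    intros t Ht1 Ht2. apply Hloc. apply Rabs_def1; lra. }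
  destruct (Rle_or_lt d2 0) as [|Hpos]; [assumption|exfalso].
  apply is_derive_Reals in Hd2.
  destruct (Hd2 d2 Hpos) as [del Hdel].
  set (t := Rmin (del / 2) (r / 2)).
  assert (Ht : 0 < t) by (pose proof (cond_pos del); unfold t; apply Rmin_glb_lt; lra).
  assert (Htdel : t < del) by (pose proof (Rmin_l (del / 2) (r / 2)); pose proof (cond_pos del); unfold t; lra).
  assert (Htr : t < r) by (pose proof (Rmin_r (del / 2) (r / 2)); unfold t; lra).
  (* [h1] vanishes at [x0] and has positive slope there, so it is positive just right of [x0] *)
  assert (Hincr : forall k, 0 < k < del -> 0 < h1 (x0 + k)).
  { intros k Hk.
    assert (Hq := Hdel k ltac:(lra) ltac:(rewrite Rabs_right; lra)).
    rewrite Hflat, Rminus_0_r in Hq. apply Rabs_def2 in Hq.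
    assert (Hdiv : 0 < h1 (x0 + k) / k) by lra.
    replace (h1 (x0 + k)) with (h1 (x0 + k) / k * k) by (field; lra).
    nra. }
  destruct (MVT_cor2 h h1 x0 (x0 + t)) as [xi [Hmvt Hxi]]; [lra| |].
  { intros y Hy. apply Hder. apply Rabs_def1; lra. }
  assert (Hpos_xi : 0 < h1 xi).
  { replace xi with (x0 + (xi - x0)) by ring. apply Hincr; lra. }
  assert (Hle : h (x0 + t) <= h x0) by (apply Hloc; rewrite Rabs_right; lra).
  nra.
Qed.

Lemma maximum_principle c a b (h h1 h2 : R -> R) :
  0 < c -> a <= b -> continuous_on_closed h a b ->
  (forall x, a < x < b -> is_derive h x (h1 x) /\ is_derive h1 x (h2 x) /\ c * h x <= h2 x) ->
  h a <= 0 -> h b <= 0 -> forall x, a <= x <= b -> h x <= 0.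
Proof.
  intros Hc Hab Hcont Hd Ha Hb x Hx.
  destruct (continuous_on_closed_attains_max h a b Hab Hcont) as [x0 [Hx0 Hmax]].
  destruct (Rle_or_lt (h x0) 0) as [Hneg|Hpos].
  { exact (Rle_trans _ _ _ (Hmax x Hx) Hneg). }
  assert (Hin : a < x0 < b).
  { destruct Hx0 as [[|] [|]]; subst; lra. }
  destruct (Hd x0 Hin) as [_ [Hd2 Hsuper]].
  assert (Hloc : forall t, Rabs (t - x0) < Rmin (x0 - a) (b - x0) ->
                   is_derive h t (h1 t) /\ h t <= h x0).
  { intros t Ht. apply Rabs_def2 in Ht.
    pose proof (Rmin_l (x0 - a) (b - x0)). pose proof (Rmin_r (x0 - a) (b - x0)).
    split; [apply Hd | apply Hmax]; lra. }
  assert (Hr : 0 < Rmin (x0 - a) (b - x0)) by (apply Rmin_glb_lt; lra).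
  pose proof (second_derivative_nonpos_at_local_max h h1 x0 _ (h2 x0) Hr Hloc Hd2).
  nra.
Qed.

(* [beta (2 + c (b - a)^2) = c] is what makes [w'' = 2 beta <= c (1 - beta (b - a)^2) <= c w]
   on [a, b]. *)
Definition barrier_coef (c a b : R) : R := c / (2 + c * ((b - a) * (b - a))).

Definition barrier (c a b x : R) : R := 1 + barrier_coef c a b * ((x - a) * (x - b)).

Section Barrier.
Variables (c a b : R).
Hypotheses (Hc : 0 < c) (Hab : a < b).

Lemma barrier_coef_pos : 0 < barrier_coef c a b.
Proof.
  unfold barrier_coef. apply Rdiv_lt_0_compat; [exact Hc|].
  assert (0 < (b - a) * (b - a)) by nra. nra.
Qed.

Lemma barrier_coef_mul : barrier_coef c a b * (2 + c * ((b - a) * (b - a))) = c.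
Proof.
  unfold barrier_coef. field.
  assert (0 < (b - a) * (b - a)) by nra. nra.
Qed.

Lemma barrier_supersolution x : a <= x <= b -> 2 * barrier_coef c a b <= c * barrier c a b x.
Proof.
  intros Hx. unfold barrier.
  pose proof barrier_coef_pos. pose proof barrier_coef_mul.
  assert (0 <= barrier_coef c a b * c * ((b - a) * (b - a) + (x - a) * (x - b))).
  { apply Rmult_le_pos; nra. }
  nra.
Qed.

Lemma barrier_range x : a <= x <= b -> 0 <= barrier c a b x <= 1.
Proof.
  intros Hx. unfold barrier.
  pose proof barrier_coef_pos. pose proof barrier_coef_mul.
  assert (barrier_coef c a b * ((b - a) * (b - a)) < 1) by nra.
  assert (0 <= barrier_coef c a b * ((x - a) * (b - x)) <= barrier_coef c a b * ((b - a) * (b - a))).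
  { split; [apply Rmult_le_pos | apply Rmult_le_compat_l]; nra. }
  nra.
Qed.

Lemma barrier_lt1 x : a < x < b -> barrier c a b x < 1.
Proof.
  intros Hx. unfold barrier.
  assert (0 < barrier_coef c a b * ((x - a) * (b - x))).
  { apply Rmult_lt_0_compat; [exact barrier_coef_pos | nra]. }
  nra.
Qed.

Lemma barrier_left : barrier c a b a = 1.
Proof. unfold barrier. ring. Qed.

Lemma barrier_right : barrier c a b b = 1.
Proof. unfold barrier. ring. Qed.

End Barrier.

Lemma is_derive_barrier c a b x :
  is_derive (barrier c a b) x (barrier_coef c a b * (2 * x - a - b)).
Proof. unfold barrier. auto_derive; auto. ring. Qed.

Lemma is_derive_barrier_derivative c a b x :
  is_derive (fun y => barrier_coef c a b * (2 * y - a - b)) x (2 * barrier_coef c a b).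
Proof. auto_derive; auto. ring. Qed.

Lemma homogeneous_helmholtz_bound c a b M (g g1 g2 : R -> R) :
  0 < c -> a < b -> continuous_on_closed g a b ->
  (forall x, a < x < b -> is_derive g x (g1 x) /\ is_derive g1 x (g2 x) /\ g2 x = c * g x) ->
  Rabs (g a) <= M -> Rabs (g b) <= M ->
  forall x, a <= x <= b -> Rabs (g x) <= M * barrier c a b x.
Proof.
  intros Hc Hab Hg Hd Ha Hb x Hx.
  assert (HM : 0 <= M) by (pose proof (Rabs_pos (g a)); lra).
  assert (Hsigned : forall s, Rabs s = 1 -> s * g x <= M * barrier c a b x).
  { intros s Hs.
    assert (Hends : forall y, Rabs (g y) <= M -> s * g y - M * 1 <= 0).
    { intros y Hy. pose proof (Rle_abs (s * g y)) as Habs.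
      rewrite Rabs_mult, Hs in Habs. lra. }
    enough (s * g x - M * barrier c a b x <= 0) by lra.
    apply (maximum_principle c a b (fun y => s * g y - M * barrier c a b y)
             (fun y => s * g1 y - M * (barrier_coef c a b * (2 * y - a - b)))
             (fun y => s * g2 y - M * (2 * barrier_coef c a b))); auto; try lra.
    - apply continuous_on_closed_minus; apply continuous_on_closed_scal; [exact Hg|].
      apply continuous_on_closed_of_continuous. intros y.
      exact (ex_derive_continuous _ y (ex_intro _ _ (is_derive_barrier c a b y))).
    - intros y Hy. destruct (Hd y Hy) as [D1 [D2 E]].
      split; [|split].
      + exact (is_derive_minus _ _ _ _ _ (is_derive_scal _ _ s _ D1)
                 (is_derive_scal _ _ M _ (is_derive_barrier c a b y))).
      + exact (is_derive_minus _ _ _ _ _ (is_derive_scal _ _ s _ D2)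
                 (is_derive_scal _ _ M _ (is_derive_barrier_derivative c a b y))).
      + rewrite E. pose proof (barrier_supersolution c a b Hc Hab y ltac:(lra)). nra.
    - rewrite barrier_left; auto.
    - rewrite barrier_right; auto. }
  pose proof (Hsigned 1 ltac:(rewrite Rabs_R1; reflexivity)).
  pose proof (Hsigned (-1) ltac:(rewrite Rabs_left; lra)).
  apply Rabs_le. lra.
Qed.

Lemma helmholtz_error_bound c f (u v : R -> R) a b M :
  0 < c -> a < b -> (forall x, helmholtz_at c f u x) -> helmholtz_on c f v a b ->
  Rabs (v a - u a) <= M -> Rabs (v b - u b) <= M ->
  forall x, a <= x <= b -> Rabs (v x - u x) <= M * barrier c a b x.
Proof.
  intros Hc Hab Hu [Hvcont Hv] Ha Hb.
  apply (homogeneous_helmholtz_bound c a b M _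
           (fun x => Derive v x - Derive u x)
           (fun x => Derive (Derive v) x - Derive (Derive u) x)); auto.
  - apply continuous_on_closed_minus; [exact Hvcont|].
    apply continuous_on_closed_of_continuous. intros x.
    apply (ex_derive_continuous u), Hu.
  - intros x Hx.
    destruct (Hv x Hx) as [V1 [V2 V3]], (Hu x) as [U1 [U2 U3]].
    split; [|split].
    + exact (is_derive_minus _ _ _ _ _ (Derive_correct _ _ V1) (Derive_correct _ _ U1)).
    + exact (is_derive_minus _ _ _ _ _ (Derive_correct _ _ V2) (Derive_correct _ _ U2)).
    + lra.
Qed.

Lemma uniform_cvg_of_geometric_bound (err : nat -> R -> R) (P : R -> Prop) q K :
  0 <= q < 1 -> (forall n s, P s -> err (S n) s <= q ^ n * K) ->
  forall eps, 0 < eps -> exists N : nat, forall n, (N <= n)%nat -> forall s, P s -> err n s <= eps.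
Proof.
  intros Hq Hbound eps Heps.
  assert (HK : 0 < Rabs K + 1) by (pose proof (Rabs_pos K); lra).
  destruct (pow_lt_1_zero q ltac:(rewrite Rabs_right; lra) (eps / (Rabs K + 1)))
    as [N HN]; [now apply Rdiv_lt_0_compat|].
  exists (S N). intros [|n] Hn s Hs; [inversion Hn|].
  specialize (HN n ltac:(lia)).
  rewrite Rabs_right in HN by (apply Rle_ge, pow_le; lra).
  apply (Rle_trans _ _ _ (Hbound n s Hs)).
  assert (q ^ n * K <= q ^ n * Rabs K) by (apply Rmult_le_compat_l; [apply pow_le; lra | apply Rle_abs]).
  assert (q ^ n * Rabs K <= eps / (Rabs K + 1) * Rabs K) by (apply Rmult_le_compat_r; [apply Rabs_pos | lra]).
  assert (eps / (Rabs K + 1) * Rabs K <= eps).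
  { apply (Rmult_le_reg_r (Rabs K + 1)); [exact HK|].
    field_simplify; [|lra]. nra. }
  lra.
Qed.

Section ParallelSchwarz.

Variables (L c : R) (f u : R -> R) (a1 b1 a2 b2 : R) (u1 u2 : nat -> R -> R).

Hypotheses (Hc : 0 < c) (Huper : periodic L u) (Hu : forall x, helmholtz_at c f u x).

Hypotheses (Hleft : a1 < b2 - L < a2) (Hright : a2 < b1 < a1 + L).

Hypothesis H1 : forall n, helmholtz_on c f (u1 (S n)) a1 b1 /\
                  u1 (S n) a1 = u2 n (a1 + L) /\ u1 (S n) b1 = u2 n b1.
Hypothesis H2 : forall n, helmholtz_on c f (u2 (S n)) a2 b2 /\
                  u2 (S n) a2 = u1 n a2 /\ u2 (S n) b2 = u1 n (b2 - L).

Definition interface_error n : R :=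
  Rmax (Rmax (Rabs (u2 n (a1 + L) - u (a1 + L))) (Rabs (u2 n b1 - u b1)))
       (Rmax (Rabs (u1 n a2 - u a2)) (Rabs (u1 n (b2 - L) - u (b2 - L)))).

Definition contraction_factor : R :=
  Rmax (Rmax (barrier c a1 b1 a2) (barrier c a1 b1 (b2 - L)))
       (Rmax (barrier c a2 b2 (a1 + L)) (barrier c a2 b2 b1)).

Lemma interface_error_nonneg n : 0 <= interface_error n.
Proof.
  unfold interface_error.
  eapply Rle_trans; [|apply Rmax_l]. eapply Rle_trans; [|apply Rmax_l]. apply Rabs_pos.
Qed.

Lemma schwarz_error_bound_1 n s : a1 <= s <= b1 ->
  Rabs (u1 (S n) s - u s) <= interface_error n * barrier c a1 b1 s.
Proof.
  destruct (H1 n) as [Hsol [Ea Eb]].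
  apply (helmholtz_error_bound c f u); auto; [lra| |]; unfold interface_error.
  - rewrite Ea, <- (Huper a1).
    eapply Rle_trans; [apply Rmax_l | apply Rmax_l].
  - rewrite Eb. eapply Rle_trans; [apply Rmax_r | apply Rmax_l].
Qed.

Lemma schwarz_error_bound_2 n s : a2 <= s <= b2 ->
  Rabs (u2 (S n) s - u s) <= interface_error n * barrier c a2 b2 s.
Proof.
  destruct (H2 n) as [Hsol [Ea Eb]].
  apply (helmholtz_error_bound c f u); auto; [lra| |]; unfold interface_error.
  - rewrite Ea. eapply Rle_trans; [apply Rmax_l | apply Rmax_r].
  - rewrite Eb. replace b2 with (b2 - L + L) at 2 by ring. rewrite Huper.
    eapply Rle_trans; [apply Rmax_r | apply Rmax_r].
Qed.

Lemma contraction_factor_range : 0 <= contraction_factor < 1.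
Proof.
  unfold contraction_factor. split.
  - apply (Rle_trans _ (barrier c a1 b1 a2)); [apply barrier_range; lra|].
    eapply Rle_trans; [apply Rmax_l | apply Rmax_l].
  - repeat apply Rmax_lub_lt; apply barrier_lt1; auto; lra.
Qed.

Lemma interface_error_contract n :
  interface_error (S n) <= contraction_factor * interface_error n.
Proof.
  pose proof (interface_error_nonneg n) as HM.
  assert (Hscale : forall e w, e <= interface_error n * w -> w <= contraction_factor ->
                     e <= contraction_factor * interface_error n).
  { intros e w He Hw. rewrite Rmult_comm.
    exact (Rle_trans _ _ _ He (Rmult_le_compat_l _ _ _ HM Hw)). }
  unfold interface_error at 1, contraction_factor; repeat apply Rmax_lub.
  - apply (Hscale _ _ (schwarz_error_bound_2 n (a1 + L) ltac:(lra))).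
    eapply Rle_trans; [apply Rmax_l | apply Rmax_r].
  - apply (Hscale _ _ (schwarz_error_bound_2 n b1 ltac:(lra))).
    eapply Rle_trans; [apply Rmax_r | apply Rmax_r].
  - apply (Hscale _ _ (schwarz_error_bound_1 n a2 ltac:(lra))).
    eapply Rle_trans; [apply Rmax_l | apply Rmax_l].
  - apply (Hscale _ _ (schwarz_error_bound_1 n (b2 - L) ltac:(lra))).
    eapply Rle_trans; [apply Rmax_r | apply Rmax_l].
Qed.

Lemma interface_error_geometric n :
  interface_error n <= contraction_factor ^ n * interface_error 0.
Proof.
  induction n as [|n IH]; [simpl; lra|].
  pose proof (interface_error_contract n). pose proof contraction_factor_range.
  simpl. nra.
Qed.

Lemma schwarz_error_geometric_1 n s : a1 <= s <= b1 ->
  Rabs (u1 (S n) s - u s) <= contraction_factor ^ n * interface_error 0.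
Proof.
  intros Hs. pose proof (schwarz_error_bound_1 n s Hs).
  pose proof (barrier_range c a1 b1 Hc ltac:(lra) s Hs).
  pose proof (interface_error_nonneg n). pose proof (interface_error_geometric n).
  nra.
Qed.

Lemma schwarz_error_geometric_2 n s : a2 <= s <= b2 ->
  Rabs (u2 (S n) s - u s) <= contraction_factor ^ n * interface_error 0.
Proof.
  intros Hs. pose proof (schwarz_error_bound_2 n s Hs).
  pose proof (barrier_range c a2 b2 Hc ltac:(lra) s Hs).
  pose proof (interface_error_nonneg n). pose proof (interface_error_geometric n).
  nra.
Qed.

End ParallelSchwarz.

Theorem theorem2
  (L c : R) (f u : R -> R) (a1 b1 a2 b2 : R)
  (u1 u2 : nat -> R -> R)
  (HL : 0 < L) (Hc : 0 < c)
  (Hfcont : forall x, continuous f x) (Hfper : periodic L f)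
  (Huper : periodic L u) (Hu : forall x, helmholtz_at c f u x)
  (Ha1 : a1 < 0) (Hb2 : L < b2)
  (Hd1 : 0 < b1 - a2) (Hd2 : 0 < b2 - (a1 + L))
  (Hd12 : 0 < (b1 - a2) + (b2 - (a1 + L)))
  (Hd12' : (b1 - a2) + (b2 - (a1 + L)) < Rmin (b1 - a1) (b2 - a2))
  (H10 : continuous_on_closed (u1 O) a1 b1)
  (H20 : continuous_on_closed (u2 O) a2 b2)
  (H1 : forall n, helmholtz_on c f (u1 (S n)) a1 b1 /\
                  u1 (S n) a1 = u2 n (a1 + L) /\
                  u1 (S n) b1 = u2 n b1)
  (H2 : forall n, helmholtz_on c f (u2 (S n)) a2 b2 /\
                  u2 (S n) a2 = u1 n a2 /\
                  u2 (S n) b2 = u1 n (b2 - L)) :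
  (forall eps, 0 < eps -> exists N : nat, forall n, (N <= n)%nat ->
     forall s, a1 <= s <= b1 -> Rabs (u1 n s - u s) <= eps) /\
  (forall eps, 0 < eps -> exists N : nat, forall n, (N <= n)%nat ->
     forall s, a2 <= s <= b2 -> Rabs (u2 n s - u s) <= eps).
Proof.
  pose proof (Rmin_l (b1 - a1) (b2 - a2)). pose proof (Rmin_r (b1 - a1) (b2 - a2)).
  assert (Hleft : a1 < b2 - L < a2) by lra.
  assert (Hright : a2 < b1 < a1 + L) by lra.
  assert (Hq := contraction_factor_range L c a1 b1 a2 b2 Hc Hleft Hright).
  split; eapply (uniform_cvg_of_geometric_bound _ _ _ _ Hq).
  - exact (schwarz_error_geometric_1 L c f u a1 b1 a2 b2 u1 u2 Hc Huper Hu Hleft Hright H1 H2).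
  - exact (schwarz_error_geometric_2 L c f u a1 b1 a2 b2 u1 u2 Hc Huper Hu Hleft Hright H1 H2).
Qed.
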